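(* Let $p\ge 2$, $w\ge 0$ and $z\in\mathbb{R}^{p-1}$. Let $|z_{(1)}|\ge |z_{(2)}|\ge\cdots$ denote the absolute values of the entries of $z$ sorted in decreasing order. Define \[ \tilde\lambda_1=\min\{\lambda\ge0:\|S(z,\lambda)\|_1+\lambda\le w\},\quad \tilde\lambda_2=\max\{\lambda\ge0:\|S(z,\lambda)\|_1+\lambda\le w\},\quad \tilde\lambda_3=\max\{\lambda\ge0:\|S(z,2\lambda)\|_1\ge w\}. \] Then: (1) $\|z\|_\infty\le w$ if and only if $\tilde\lambda_1,\tilde\lambda_2$ are finite, in which case $\tilde\lambda_1\le |z_{(2)}|$ and $\tilde\lambda_2=w$. (2) $\|z\|_1\ge w>0$ if and only if $\tilde\lambda_3$ is finite, in which case $\tilde\lambda_3\le (1-w/\|z\|_1)\,\|z\|_\infty/2$. (3) If $w>0$ and $\|z\|_\infty\le w\le \|z\|_1$, then $\tilde\lambda_3\le\tilde\lambda_1\le\tilde\lambda_2$.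
   Context: $S(x,t)=\mathrm{sign}(x)\cdot(|x|-t)_+$ is the soft-thresholding function, applied componentwise to vectors. Conventions: the minimum of an empty set is $+\infty$, the maximum of an empty set is $-\infty$, and the maximum of a set unbounded above is $+\infty$; ''finite'' means not $\pm\infty$. If $p-1=1$, set $|z_{(2)}|:=0$. *)

From HB Require Import structures.
From mathcomp Require Import all_boot all_order all_algebra.
From mathcomp Require Import all_classical all_reals ereal.
Set Implicit Arguments. Unset Strict Implicit. Unset Printing Implicit Defensive.
Import Order.TTheory GRing.Theory Num.Theory.
Local Open Scope ring_scope.
Local Open Scope classical_set_scope.

(* Soft-thresholding S(x,t) = sign(x) * (|x| - t)_+ *)
Definition soft {R : realType} (x t : R) : R := Num.sg x * Num.max (`|x| - t) 0.

Definition soft_norm1 {R : realType} {n : nat} (z : 'I_n -> R) (t : R) : R :=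
  \sum_(i < n) `|soft (z i) t|.

Definition norm1 {R : realType} {n : nat} (z : 'I_n -> R) : R := \sum_(i < n) `|z i|.
Definition normInf {R : realType} {n : nat} (z : 'I_n -> R) : R :=
  \big[Num.max/0]_(i < n) `|z i|.

(* |z_(2)| : second largest absolute value of the entries of z; 0 if n = 1
   (nth default 0 handles that case). *)
Definition abs_sorted2 {R : realType} {n : nat} (z : 'I_n -> R) : R :=
  nth 0 (sort (fun a b : R => b <= a) [seq `|z i| | i <- enum 'I_n]) 1.

(* min of a set of reals, in extended reals: +oo on the empty set.
   (The sets used below are closed, so the minimum is attained when nonempty.) *)
Definition setmin {R : realType} (A : set R) : \bar R := ereal_inf [set x%:E | x in A].
(* max of a set: -oo if empty, +oo if unbounded above. *)
Definition setmax {R : realType} (A : set R) : \bar R := ereal_sup [set x%:E | x in A].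

Definition Lset12 {R : realType} {n : nat} (z : 'I_n -> R) (w : R) : set R :=
  [set l | 0 <= l /\ soft_norm1 z l + l <= w].
Definition Lset3 {R : realType} {n : nat} (z : 'I_n -> R) (w : R) : set R :=
  [set l | 0 <= l /\ w <= soft_norm1 z (2 * l)].

Definition lambda1 {R : realType} {n : nat} (z : 'I_n -> R) (w : R) := setmin (Lset12 z w).
Definition lambda2 {R : realType} {n : nat} (z : 'I_n -> R) (w : R) := setmax (Lset12 z w).
Definition lambda3 {R : realType} {n : nat} (z : 'I_n -> R) (w : R) := setmax (Lset3 z w).

(* The map f t := ||S(z,t)||_1 = sum_i (|z_i| - t)_+ is convex and piecewise
   linear on [0, +oo): it starts at ||z||_1, is nonincreasing, vanishes from
   ||z||_inf on, and lies below its chord, f t <= ||z||_1 (1 - t/||z||_inf).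
   Moreover f t + t >= ||z||_inf, so the constraint f t + t <= w defining
   lambda1 and lambda2 is satisfiable only if ||z||_inf <= w, and then by
   t = w and by t = |z_(2)| (where f t + t = ||z||_inf).  The chord bound turns
   w <= f (2 t) into the bound on lambda3, and monotonicity of f compares the
   two constraints, giving lambda3 <= lambda1. *)

From HB Require Import structures.
From mathcomp Require Import all_boot all_order all_algebra.
From mathcomp Require Import all_classical all_reals ereal.
From mathcomp Require Import ring lra.
Import Order.TTheory GRing.Theory Num.Theory.
Local Open Scope ring_scope.
Local Open Scope classical_set_scope.

Set Implicit Arguments.
Unset Strict Implicit.
Unset Printing Implicit Defensive.

Section setmin_setmax.
Variable R : realType.
Implicit Types (A : set R) (x c : R).

Lemma setmin_le A x : A x -> (setmin A <= x%:E)%E.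
Proof. by move=> Ax; apply: ereal_inf_lbound; exists x. Qed.

Lemma setmin_ge A c : (forall x, A x -> c <= x) -> (c%:E <= setmin A)%E.
Proof. by move=> cA; apply: le_ereal_inf_tmp => _ [x Ax <-]; rewrite lee_fin cA. Qed.

Lemma setmax_ge A x : A x -> (x%:E <= setmax A)%E.
Proof. by move=> Ax; apply: ereal_sup_ubound; exists x. Qed.

Lemma setmax_le A c : (forall x, A x -> x <= c) -> (setmax A <= c%:E)%E.
Proof. by move=> Ac; apply: ge_ereal_sup => _ [x Ax <-]; rewrite lee_fin Ac. Qed.

Lemma setmax_le_setmin A B :
  (forall a b, A a -> B b -> a <= b) -> (setmax A <= setmin B)%E.
Proof.
move=> AB; apply: le_ereal_inf_tmp => _ [b Bb <-].
by apply: setmax_le => a Aa; exact: AB.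
Qed.

Lemma image_EFin_eq0 A : ~ (exists x, A x) -> [set x%:E | x in A] = set0.
Proof. by move=> A0; apply/seteqP; split=> // y [x Ax _]; apply: A0; exists x. Qed.

Lemma setmin_fin_num_nonempty A : setmin A \is a fin_num -> exists x, A x.
Proof.
move=> fA; apply: contrapT => A0.
by move: fA; rewrite /setmin image_EFin_eq0 // ereal_inf0.
Qed.

Lemma setmax_fin_num_nonempty A : setmax A \is a fin_num -> exists x, A x.
Proof.
move=> fA; apply: contrapT => A0.
by move: fA; rewrite /setmax image_EFin_eq0 // ereal_sup0.
Qed.

Lemma setmax_fin_num_bounded A : setmax A \is a fin_num ->
  exists c, forall x, A x -> x <= c.
Proof.
case E : (setmax A) => [c| |] // _; exists c => x /setmax_ge.
by rewrite E lee_fin.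
Qed.

Lemma setmin_fin_num A x c :
  A x -> (forall y, A y -> c <= y) -> setmin A \is a fin_num.
Proof. by move=> /setmin_le + /setmin_ge; case: (setmin A). Qed.

Lemma setmax_fin_num A x c :
  A x -> (forall y, A y -> y <= c) -> setmax A \is a fin_num.
Proof. by move=> /setmax_ge + /setmax_le; case: (setmax A). Qed.

End setmin_setmax.

Section soft_threshold.
Variable R : realType.
Implicit Types x t : R.

Lemma normr_soft x t : 0 <= t -> `|soft x t| = Num.max (`|x| - t) 0.
Proof.
move=> t0; rewrite /soft normrM normr_sg ger0_norm ?le_max ?lexx ?orbT //.
have [->|nx] := eqVneq x 0; last by rewrite mul1r.
by rewrite mul0r normr0 sub0r; apply/esym/max_idPr; rewrite oppr_le0.
Qed.

Variables (n : nat) (z : 'I_n -> R).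

Lemma soft_norm1E t : 0 <= t ->
  soft_norm1 z t = \sum_(i < n) Num.max (`|z i| - t) 0.
Proof. by move=> t0; apply: eq_bigr => i _; rewrite normr_soft. Qed.

Lemma soft_norm1_ge0 t : 0 <= soft_norm1 z t.
Proof. exact: sumr_ge0. Qed.

Lemma soft_norm10 : soft_norm1 z 0 = norm1 z.
Proof. by rewrite soft_norm1E //; apply: eq_bigr => i _; rewrite subr0 max_l. Qed.

Lemma soft_norm1_le t s : 0 <= t -> t <= s -> soft_norm1 z s <= soft_norm1 z t.
Proof.
move=> t0 ts; rewrite !soft_norm1E ?(le_trans t0) //.
by apply: ler_sum => i _; apply: le_max2 => //; rewrite lerB.
Qed.

Lemma ler_normInf i : `|z i| <= normInf z.
Proof. exact: le_bigmax. Qed.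

Lemma normInf_ge0 : 0 <= normInf z.
Proof. by rewrite /normInf; elim/big_ind: _ => //= a b; rewrite le_max => ->. Qed.

Lemma normInf_le c : 0 <= c -> (forall i, `|z i| <= c) -> normInf z <= c.
Proof. by move=> c0 zc; rewrite /normInf; apply: bigmax_le. Qed.

Lemma normInf_le_soft_norm1D t : 0 <= t -> normInf z <= soft_norm1 z t + t.
Proof.
move=> t0; apply: normInf_le => [|i]; first by rewrite addr_ge0 ?soft_norm1_ge0.
rewrite soft_norm1E // (bigD1 i) //= -addrA.
have rest_ge0 : 0 <= \sum_(j < n | j != i) Num.max (`|z j| - t) 0.
  by apply: sumr_ge0 => j _; rewrite le_max lexx orbT.
have : `|z i| - t <= Num.max (`|z i| - t) 0 by rewrite le_max lexx.
lra.
Qed.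

Lemma soft_norm1_eq0 t : normInf z <= t -> soft_norm1 z t = 0.
Proof.
move=> zt; rewrite soft_norm1E ?(le_trans normInf_ge0) //.
by apply: big1 => i _; apply/max_idPr; rewrite subr_le0 (le_trans (ler_normInf i)).
Qed.

(* Each summand t |-> (a - t)_+ with 0 <= a <= M lies below its chord
   a (1 - t / M) on [0, M]. *)
Lemma soft_norm1_le_chord t : 0 <= t -> t <= normInf z -> 0 < normInf z ->
  soft_norm1 z t <= norm1 z - norm1 z * t / normInf z.
Proof.
move=> t0 tM M0; rewrite soft_norm1E // /norm1 -mulrA mulr_suml -sumrB.
apply: ler_sum => i _; rewrite ge_max; set a := `|z i|.
have aM : a <= normInf z by exact: ler_normInf.
have at_le : a * (t / normInf z) <= a.
  by rewrite ler_piMr ?normr_ge0 // ler_pdivrMr // mul1r.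
have ta_le : t * (a / normInf z) <= t.
  by rewrite ler_piMr // ler_pdivrMr // mul1r.
have -> : a * (t / normInf z) = t * (a / normInf z) by rewrite mulrCA !mulrA.
apply/andP; split; lra.
Qed.

Let abs_sorted := sort (fun a b : R => b <= a) [seq `|z i| | i <- enum 'I_n].

Lemma abs_sorted_sorted : sorted (fun a b : R => b <= a) abs_sorted.
Proof. by apply: sort_sorted => a b; rewrite orbC le_total. Qed.

Lemma mem_abs_sorted x : x \in abs_sorted -> exists i, x = `|z i|.
Proof. by rewrite mem_sort => /mapP [i _ ->]; exists i. Qed.

Lemma big_abs_sorted (F : R -> R) :
  \sum_(i < n) F `|z i| = \sum_(x <- abs_sorted) F x.
Proof. by rewrite [RHS](perm_big _ (permEl (perm_sort _ _))) big_map big_enum. Qed.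

Lemma size_abs_sorted : size abs_sorted = n.
Proof. by rewrite size_sort size_map size_enum_ord. Qed.

Lemma abs_sorted2_ge0 : 0 <= abs_sorted2 z.
Proof.
rewrite /abs_sorted2 -/abs_sorted.
have [lt1s|] := ltnP 1 (size abs_sorted); last by move=> s1; rewrite nth_default.
by have [i ->] := mem_abs_sorted (mem_nth 0 lt1s).
Qed.

(* Only the largest entry exceeds |z_(2)|, and by exactly ||z||_inf - |z_(2)|. *)
Lemma soft_norm1_abs_sorted2 : (0 < n)%N ->
  soft_norm1 z (abs_sorted2 z) + abs_sorted2 z <= normInf z.
Proof.
move=> n0; have := abs_sorted2_ge0.
rewrite soft_norm1E ?abs_sorted2_ge0 // /abs_sorted2 -/abs_sorted.
rewrite (big_abs_sorted (fun x => Num.max (x - _) 0)).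
have := mem_abs_sorted; have := size_abs_sorted; have := abs_sorted_sorted.
case: abs_sorted => [|x0 [|x1 s]] /=; first by move=> _ sz; rewrite -sz in n0.
  move=> _ _ mem _; have [i ->] := mem x0 (mem_head _ _).
  by rewrite big_seq1 subr0 max_l // addr0 ler_normInf.
move=> /andP[x10 path_s] _ mem x1_ge0.
have [i x0E] := mem x0 (mem_head _ _).
rewrite !big_cons subrr maxxx add0r big1_seq ?addr0; last first.
  move=> y /andP[_ ys]; apply/max_idPr; rewrite subr_le0.
  by have /allP/(_ y ys) := order_path_min (fun _ _ _ h1 h2 => le_trans h2 h1) path_s.
by rewrite max_l ?subr_ge0 // subrK x0E ler_normInf.
Qed.

End soft_threshold.

Section lambda_sets.
Variables (R : realType) (n : nat) (z : 'I_n -> R) (w : R).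
Hypothesis w_ge0 : 0 <= w.

Lemma Lset12_normInf l : Lset12 z w l -> normInf z <= w.
Proof. by case=> l0; apply: le_trans; exact: normInf_le_soft_norm1D. Qed.

Lemma Lset12_le l : Lset12 z w l -> l <= w.
Proof. by case=> _; have := soft_norm1_ge0 z l; lra. Qed.

Lemma Lset12_w : normInf z <= w -> Lset12 z w w.
Proof. by move=> zw; split=> //; rewrite soft_norm1_eq0 ?add0r. Qed.

Lemma lambda2E : normInf z <= w -> lambda2 z w = w%:E.
Proof.
move=> zw; apply/le_anti; rewrite setmax_le ?setmax_ge //; first exact: Lset12_w.
exact: Lset12_le.
Qed.

Lemma Lset3_0 : w <= norm1 z -> Lset3 z w 0.
Proof. by split; rewrite // mulr0 soft_norm10. Qed.

(* The chord bound applies since w > 0 forces 2 l < ||z||_inf. *)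
Lemma Lset3_bound l : 0 < w -> Lset3 z w l ->
  [/\ 0 < norm1 z, w <= norm1 z & l <= (1 - w / norm1 z) * normInf z / 2].
Proof.
move=> w0 [l0 wl].
have wN : w <= norm1 z.
  by rewrite (le_trans wl) // -soft_norm10 soft_norm1_le // mulr_ge0.
have N0 : 0 < norm1 z by lra.
have lt2M : 2 * l < normInf z.
  by rewrite ltNge; apply/negP => /soft_norm1_eq0 f0; move: wl; rewrite f0; lra.
have M0 : 0 < normInf z by lra.
have chord := soft_norm1_le_chord (mulr_ge0 (ler0n _ 2) l0) (ltW lt2M) M0.
split=> //; move: N0 M0 chord wl.
set N := norm1 z; set M := normInf z => N0 M0 chord wl.
have scaled : w * (M / N) <= M - 2 * l.
  have -> : M - 2 * l = (N - N * (2 * l) / M) * (M / N).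
    by field; rewrite !gt_eqF.
  by rewrite ler_pM2r ?divr_gt0 //; lra.
have -> : (1 - w / N) * M / 2 = (M - w * (M / N)) / 2 by field; rewrite gt_eqF.
lra.
Qed.

Lemma Lset3_unbounded : w = 0 -> forall c, exists2 l, Lset3 z w l & c < l.
Proof.
move=> w0 c; exists (Num.max c 0 + 1).
  by split; rewrite ?w0 ?soft_norm1_ge0 // addr_ge0 // le_max lexx orbT.
have : c <= Num.max c 0 by rewrite le_max lexx.
lra.
Qed.

Lemma Lset3_le_Lset12 a b : 0 < w -> Lset3 z w a -> Lset12 z w b -> a <= b.
Proof.
move=> w0 Aa [b0 fb]; rewrite leNgt; apply/negP => ba.
have [N0 wN aM] := Lset3_bound w0 Aa; case: Aa => a0 wfa.
have fab : soft_norm1 z (2 * a) <= soft_norm1 z b.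
  by apply: soft_norm1_le => //; lra.
have b00 : b = 0 by have := soft_norm1_ge0 z b; lra.
move: fb; rewrite b00 soft_norm10 addr0 => Nw.
have : (1 - w / norm1 z) * normInf z <= 0.
  by rewrite mulr_le0_ge0 ?normInf_ge0 // subr_le0 ler_pdivlMr // mul1r.
lra.
Qed.

End lambda_sets.

Theorem lemma2 (R : realType) (p : nat) (hp : (2 <= p)%N) (w : R) (hw : 0 <= w)
    (z : 'I_p.-1 -> R) :
  ((normInf z <= w) <->
     (lambda1 z w \is a fin_num /\ lambda2 z w \is a fin_num))
  /\ (normInf z <= w ->
        (lambda1 z w <= (abs_sorted2 z)%:E)%E /\ lambda2 z w = w%:E)
  /\ ((w <= norm1 z /\ 0 < w) <-> lambda3 z w \is a fin_num)
  /\ (w <= norm1 z /\ 0 < w ->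
        (lambda3 z w <= ((1 - w / norm1 z) * normInf z / 2)%:E)%E)
  /\ (0 < w -> normInf z <= w -> w <= norm1 z ->
        (lambda3 z w <= lambda1 z w)%E /\ (lambda1 z w <= lambda2 z w)%E).
Proof.
have n0 : (0 < p.-1)%N by rewrite -ltnS prednK // ltnW.
have lambda1_ge0 l : Lset12 z w l -> 0 <= l by case.
have lambda3_le : 0 < w -> (lambda3 z w <= ((1 - w / norm1 z) * normInf z / 2)%:E)%E.
  by move=> w0; apply: setmax_le => l /(Lset3_bound w0) [].
have Lset12_s2 : normInf z <= w -> Lset12 z w (abs_sorted2 z).
  by move=> zw; split; [exact: abs_sorted2_ge0 | exact/(le_trans _ zw)/soft_norm1_abs_sorted2].
split; [split|split; [|split; [split|split]]].
- move=> zw; rewrite lambda2E //; split=> //.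
  exact: setmin_fin_num (Lset12_w hw zw) lambda1_ge0.
- by case=> /setmin_fin_num_nonempty [l /Lset12_normInf].
- by move=> zw; rewrite lambda2E //; split=> //; apply/setmin_le/Lset12_s2.
- case=> wN w0; apply: setmax_fin_num (Lset3_0 wN) _ => l /(Lset3_bound w0) [] _ _.
  exact.
- move=> fin3; have [l Ll] := setmax_fin_num_nonempty fin3.
  have w0 : 0 < w.
    rewrite lt_neqAle hw andbT; apply/eqP => w0.
    have [c bc] := setmax_fin_num_bounded fin3.
    by have [l' /bc] := Lset3_unbounded z (esym w0) c; rewrite leNgt => /negP.
  by have [] := Lset3_bound w0 Ll.
- by case=> _; exact: lambda3_le.
- move=> w0 zw wN; split.
    by apply: setmax_le_setmin => a b; apply: Lset3_le_Lset12.
  by rewrite lambda2E //; apply: setmin_le; exact: Lset12_w.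
Qed.
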